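(* If $P$ is a rooted star poset with $n$ elements, then the degree of noninvertibility of promotion $\partial:\Lambda(P)\to\Lambda(P)$ equals $n$.
   Context: $\Lambda(P)$ is the set of labelings (bijections $P\to[n]$) of $P$. Promotion $\partial$: for non-maximal $x$, the $L$-successor of $x$ is the element greater than $x$ with minimal label; the promotion chain is $v_1=L^{-1}(1)$, $v_{i+1}$ the $L$-successor of $v_i$, ending at the first maximal $v_m$; $\partial(L)(x)=L(x)-1$ off the chain, $\partial(L)(v_i)=L(v_{i+1})-1$ for $i<m$, $\partial(L)(v_m)=n$. A rooted star poset is a poset with a unique maximal element (the root) that covers every other element, and no other relations. The degree of noninvertibility of $f:X\to X$ ($X$ finite) is $\deg(f)=\frac{1}{|X|}\sum_{x\in X}|f^{-1}(x)|^2$. *)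

From HB Require Import structures.
From mathcomp Require Import all_boot all_order all_algebra.
Set Implicit Arguments. Unset Strict Implicit. Unset Printing Implicit Defensive.
Import Order.Theory GRing.Theory Num.Theory.

(* Labels: the paper's label k in [n] = {1,...,n} is represented by the
   ordinal k-1 : 'I_n, with n = #|T|. *)

Section Promotion.
Context {disp : Order.disp_t} {T : finPOrderType disp}.

Local Notation n := #|T|.
Local Notation lab := {ffun T -> 'I_#|T|}.

Definition labelings : {set lab} := [set L : lab | injectiveb L].

Definition maximal (x : T) : bool := ~~ [exists y, (x < y)%O].

Definition lsucc (L : lab) (x : T) : option T :=
  [pick y | (x < y)%O && [forall z, (x < z)%O ==> (L y <= L z)%N]].

Fixpoint chain_from (L : lab) (fuel : nat) (x : T) : seq T :=
  if fuel is k.+1 then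
    match lsucc L x with
    | Some y => x :: chain_from L k y
    | None => [:: x]
    end
  else [:: x].

Definition prom_chain (L : lab) : seq T :=
  match [pick x | nat_of_ord (L x) == 0%N] with
  | Some v1 => chain_from L n v1
  | None => [::]
  end.

Definition promotion_nat (L : lab) (x : T) : nat :=
  let c := prom_chain L in
  if x \in c then
    let i := index x c in
    if (i.+1 < size c)%N then (L (nth x c i.+1)).-1 else n.-1
  else (L x).-1.

Definition promotion (L : lab) : lab :=
  [ffun x => insubd (L x) (promotion_nat L x)].

End Promotion.

Definition deg_noninv (U : finType) (f : U -> U) (A : {set U}) : rat :=
  ((\sum_(x in A) (#|[set y in A | f y == x]| ^ 2)%N%:R) / #|A|%:R)%R.

Definition rooted_star {disp : Order.disp_t} (T : finPOrderType disp) : Prop :=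
  exists r : T, forall x y : T, (x < y)%O = (y == r) && (x != r).

(* In a rooted star with root r, if a is the element labelled 1 then the
   promotion chain is a, r (just r when a = r), so promotion swaps the labels
   of a and r and then decrements every label cyclically: dL = pred o L o (a r).
   Hence dL always gives r the label n, and a labeling M with M r = n has
   exactly the n preimages succ o M o (a r), a in P, which are pairwise
   distinct because the one indexed by a labels a with 1.  Every nonempty
   fibre thus has n elements, and the mean squared fibre size is n. *)

From HB Require Import structures.
From mathcomp Require Import all_boot all_order all_algebra all_fingroup.
Set Implicit Arguments. Unset Strict Implicit. Unset Printing Implicit Defensive.
Import GRing.Theory Num.Theory.

Lemma card_fibers_sum (U : finType) (f : U -> U) (A : {set U}) :
  {in A, forall y, f y \in A} ->
  (\sum_(x in A) #|[set y in A | f y == x]|)%N = #|A|.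
Proof.
move=> fA; have -> : #|A| = (\sum_(y in A) 1)%N by rewrite sum1_card.
rewrite [RHS](partition_big f (mem A)) //=.
by apply: eq_bigr => x _; rewrite sum1dep_card; apply: eq_card => y; rewrite !inE.
Qed.

Lemma deg_noninv_uniform_fibers (U : finType) (f : U -> U) (A : {set U}) k :
  A != set0 -> {in A, forall y, f y \in A} ->
  {in A, forall x, #|[set y in A | f y == x]| \in [:: 0; k]}%N ->
  deg_noninv f A = (k%:R)%R.
Proof.
move=> A0 fA fib; rewrite /deg_noninv -natr_sum.
have -> : (\sum_(x in A) #|[set y in A | f y == x]| ^ 2 = k * #|A|)%N.
  rewrite -(card_fibers_sum fA) big_distrr /=; apply: eq_bigr => x /fib.
  by rewrite !inE => /orP[] /eqP ->; rewrite ?muln0 // mulnn.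
by rewrite natrM mulfK // pnatr_eq0 cards_eq0.
Qed.

Lemma val_ord_pred m (i : 'I_m) :
  val (ord_pred i) = if val i == 0 then m.-1 else (val i).-1.
Proof.
case: i => [[|i] lt_i_m] /=; first by rewrite modn_small // prednK.
by rewrite modnDr modn_small // ltnW.
Qed.

Section RootedStar.
Context {disp : Order.disp_t} {T : finPOrderType disp} (r : T).
Hypothesis lt_star : forall x y : T, (x < y)%O = (y == r) && (x != r).

Local Notation n := #|T|.
Local Notation labeling := {ffun T -> 'I_#|T|}.

Lemma card_star_gt0 : 0 < n.
Proof. by apply/card_gt0P; exists r. Qed.

Lemma lsucc_root (L : labeling) : lsucc L r = None.
Proof. by rewrite /lsucc; case: pickP => // y; rewrite lt_star eqxx andbF. Qed.

Lemma lsucc_leaf (L : labeling) x : x != r -> lsucc L x = Some r.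
Proof.
move=> xr; rewrite /lsucc; case: pickP => [y /andP[] | /(_ r)].
  by rewrite lt_star xr andbT => /eqP ->.
rewrite lt_star eqxx xr /=; case/forallP => z; rewrite lt_star xr andbT.
by apply/implyP => /eqP ->.
Qed.

Lemma chain_from_root (L : labeling) k : chain_from L k r = [:: r].
Proof. by case: k => //= k; rewrite lsucc_root. Qed.

Lemma prom_chain_star (L : labeling) a : injective L -> val (L a) = 0 ->
  prom_chain L = a :: (if a == r then [::] else [:: r]).
Proof.
move=> L_inj La; rewrite /prom_chain.
case: pickP => [b /eqP Lb | /(_ a)]; last by rewrite La.
have -> : b = a by apply: L_inj; apply: val_inj; rewrite /= Lb La.
rewrite -(prednK card_star_gt0) /=; case: eqP => [-> | /eqP ar].
  by rewrite lsucc_root.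
by rewrite lsucc_leaf // chain_from_root.
Qed.

Lemma labeling_zero (L : labeling) : injective L -> exists a, val (L a) = 0.
Proof.
move=> L_inj; have := inj_card_onto L_inj (eq_leq (card_ord _)) (Ordinal card_star_gt0).
by case/codomP => a La; exists a; rewrite -La.
Qed.

Lemma promotion_nat_star (L : labeling) a x : injective L -> val (L a) = 0 ->
  promotion_nat L x = val (ord_pred (L (tperm a r x))).
Proof.
move=> L_inj La; have Lneq0 y : y != a -> val (L y) != 0.
  by rewrite -La; apply: contraNneq => /val_inj/L_inj ->.
rewrite /promotion_nat (prom_chain_star L_inj La) val_ord_pred.
have [-> | xr] := eqVneq x r.
  rewrite tpermR La eqxx.
  by case: eqVneq => [-> | ar]; rewrite /= ?inE eqxx ?orbT //= (negbTE ar).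
case: (eqVneq x a) xr => [-> ar | xa xr]; last first.
  rewrite tpermD 1?eq_sym // (negbTE (Lneq0 _ xa)) !inE (negbTE xa) /=.
  by case: eqP => //= _; rewrite inE (negbTE xr).
by rewrite (negbTE ar) tpermL (negbTE (Lneq0 r _)) 1?eq_sym // inE eqxx /= eqxx.
Qed.

Lemma promotion_star (L : labeling) a : injective L -> val (L a) = 0 ->
  promotion L = [ffun x => ord_pred (L (tperm a r x))].
Proof.
move=> L_inj La; apply/ffunP => x; apply: val_inj.
by rewrite !ffunE val_insubd (promotion_nat_star _ L_inj La) ltn_ord.
Qed.

Lemma promotion_labeling (L : labeling) : L \in labelings -> promotion L \in labelings.
Proof.
rewrite !inE => /injectiveP L_inj; have [a La] := labeling_zero L_inj.
rewrite (promotion_star L_inj La); apply/injectiveP => x y.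
by rewrite !ffunE => /ord_pred_inj/L_inj/perm_inj.
Qed.

Lemma promotion_root (L : labeling) : L \in labelings -> val (promotion L r) = n.-1.
Proof.
rewrite inE => /injectiveP L_inj; have [a La] := labeling_zero L_inj.
by rewrite (promotion_star L_inj La) ffunE tpermR val_ord_pred La.
Qed.

Definition unpromote (M : labeling) (a : T) : labeling :=
  [ffun x => ordS (M (tperm a r x))].

Lemma unpromote_labeling (M : labeling) a :
  M \in labelings -> unpromote M a \in labelings.
Proof.
rewrite !inE => /injectiveP M_inj; apply/injectiveP => x y.
by rewrite !ffunE => /ordS_inj/M_inj/perm_inj.
Qed.

Lemma unpromote_self (M : labeling) a : val (M r) = n.-1 -> val (unpromote M a a) = 0.
Proof. by move=> Mr; rewrite ffunE tpermL /= Mr prednK ?modnn ?card_star_gt0. Qed.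

Lemma promotion_unpromote (M : labeling) a : M \in labelings -> val (M r) = n.-1 ->
  promotion (unpromote M a) = M.
Proof.
move=> /(unpromote_labeling a); rewrite inE => /injectiveP L_inj Mr.
rewrite (promotion_star L_inj (unpromote_self a Mr)).
by apply/ffunP => x; rewrite !ffunE tpermK ordSK.
Qed.

Lemma unpromote_promotion (L : labeling) : L \in labelings ->
  exists a, unpromote (promotion L) a = L.
Proof.
rewrite inE => /injectiveP L_inj; have [a La] := labeling_zero L_inj.
exists a; rewrite (promotion_star L_inj La).
by apply/ffunP => x; rewrite !ffunE tpermK ord_predK.
Qed.

Lemma unpromote_inj (M : labeling) : M \in labelings -> val (M r) = n.-1 ->
  injective (unpromote M).
Proof.
move=> M_lab Mr a b eq_ab; have := unpromote_labeling b M_lab.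
rewrite inE => /injectiveP; apply; apply: val_inj.
by rewrite unpromote_self // -eq_ab unpromote_self.
Qed.

Lemma promotion_fiber (M : labeling) : M \in labelings ->
  [set L in labelings | promotion L == M] =
    if val (M r) == n.-1 then unpromote M @: T else set0.
Proof.
move=> M_lab; apply/setP => L; rewrite inE.
case: ifP => [/eqP Mr | /eqP Mr].
  apply/andP/imsetP => [[L_lab /eqP <-] | [a _ ->]].
    by have [a aL] := unpromote_promotion L_lab; exists a.
  by rewrite unpromote_labeling // promotion_unpromote.
rewrite in_set0; apply/negbTE/andP => -[L_lab /eqP PL].
by apply: Mr; rewrite -PL promotion_root.
Qed.

Lemma card_promotion_fiber (M : labeling) : M \in labelings ->
  #|[set L in labelings | promotion L == M]| \in [:: 0; n].
Proof.
move=> M_lab; rewrite promotion_fiber //; case: eqP => [Mr | _].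
  by rewrite card_imset ?inE ?eqxx ?orbT //; apply: unpromote_inj.
by rewrite cards0.
Qed.
End RootedStar.

Theorem mainTheorem4 (disp : Order.disp_t) (T : finPOrderType disp) :
  rooted_star T ->
  deg_noninv (@promotion disp T) (@labelings disp T) = (#|T|%:R)%R.
Proof.
case=> r lt_star; apply: deg_noninv_uniform_fibers.
- apply/set0Pn; exists [ffun x => enum_rank x]; rewrite inE.
  by apply/injectiveP => x y; rewrite !ffunE; apply: enum_rank_inj.
- exact: promotion_labeling lt_star.
- exact: card_promotion_fiber lt_star.
Qed.
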